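(* Let $(V,A,\succ)$ be an election, $\mathcal{I}$ a probability distribution on $[0,1]$, and let $(x,y,p)$ be a LEO with income distribution $\mathcal{I}$ and total budget $B=1$. Then $\sum_{a\in A}y_a=1$ and $x_{v,a}=y_a$ for all $a\in A$ and $v\in V$.
   Context: An election $(V,A,\succ)$: finite nonempty voter set $V$, finite candidate set $A$, strict linear order $\succ_v$ on $A$ per voter. Extend $\succ_v$ to $A\cup\{\emptyset\}$ with $\emptyset$ strictly below all candidates. Given prices $p_v\in[0,1]^{A\cup\{\emptyset\}}$ with $p_{v,\emptyset}=0$ and income $b\ge0$, voter $v$'s demand is the $\succ_v$-maximal element of $\{a\in A\cup\{\emptyset\}: p_{v,a}\le b\}$; the random demand $\mathcal{D}_v(p_v,\mathcal{I})$ is this demand with $b\sim\mathcal{I}$. A LEO $(x,y,p)$ with income $\mathcal{I}$ and budget $B>0$ consists of prices $p_v\in[0,1]^{A\cup\{\emptyset\}}$ with $p_{v,\emptyset}=0$ and consumptions $x_v\in[0,1]^{A\cup\{\emptyset\}}$ for each $v\in V$, and $y\in[0,B]^A$, such that: (1) $x_{v,a}=\Pr[\mathcal{D}_v(p_v,\mathcal{I})=a]$ for all $a\in A\cup\{\emptyset\}$; (2) for each $a\in A$, $x_{v,a}\le y_a$, and if $x_{v,a}<y_a$ then $p_{v,a}=0$; (3) $y$ maximizes $\sum_{a\in A}\big(\sum_{v\in V}p_{v,a}\big)z_a$ over $z\in\mathbb{R}_{\ge0}^A$ with $\sum_a z_a=B$. *)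

From HB Require Import structures.
From mathcomp Require Import all_boot all_order all_algebra.
From mathcomp Require Import all_classical all_reals all_analysis.
Set Implicit Arguments. Unset Strict Implicit. Unset Printing Implicit Defensive.
Import Order.TTheory GRing.Theory Num.Theory.
Local Open Scope ring_scope.
Local Open Scope classical_set_scope.

Definition strict_linear_order (A : eqType) (r : rel A) : Prop :=
  [/\ (forall a, ~~ r a a),
      (forall a b c, r a b -> r b c -> r a c) &
      (forall a b, a != b -> r a b \/ r b a)].

(* Extension of ≻ to A ∪ {∅}, with ∅ represented by [None], strictly below
   every candidate. *)
Definition pref_opt (A : Type) (r : rel A) : rel (option A) :=
  fun a b => match a, b with
             | Some a, Some b => r a b
             | Some _, None => true
             | _, _ => false
             end.

Definition is_demand (R : realType) (A : eqType) (r : rel A)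
    (pv : option A -> R) (b : R) (d : option A) : Prop :=
  pv d <= b /\ (forall a, pv a <= b -> a != d -> pref_opt r d a).

Definition is_LEO (R : realType) (V A : finType) (pref : V -> rel A)
    (P : probability R R) (B : R)
    (x : V -> option A -> R) (y : A -> R) (p : V -> option A -> R) : Prop :=
  (forall v a, 0 <= p v a <= 1) /\ (forall v, p v None = 0) /\
  (forall v a, 0 <= x v a <= 1) /\ (forall a, 0 <= y a <= B) /\
  (forall v a, (x v a)%:E = P [set b | is_demand (pref v) (p v) b a]) /\
  (forall v a, x v (Some a) <= y a /\
     (x v (Some a) < y a -> p v (Some a) = 0)) /\
  ((\sum_(a : A) y a = B) /\
   forall z : A -> R, (forall a, 0 <= z a) -> \sum_(a : A) z a = B ->
     \sum_(a : A) (\sum_(v : V) p v (Some a)) * z a <=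
     \sum_(a : A) (\sum_(v : V) p v (Some a)) * y a).

From HB Require Import structures.
From mathcomp Require Import all_boot all_order all_algebra.
From mathcomp Require Import all_classical all_reals all_analysis.
Import Order.TTheory GRing.Theory Num.Theory.
Local Open Scope ring_scope.
Local Open Scope classical_set_scope.

(* Suppose x_{v,a} < y_a for some voter v and candidate a. Then p_{v,a} = 0 by
   condition (2), so every nonnegative income affords a, and voter v never
   demands the empty bundle on [0,1]. As the income lies in [0,1] almost
   surely, v's consumptions add up to at least 1. On the other hand they are
   dominated by y, strictly at a, and y sums to the budget 1: contradiction. *)

Section Greatest.
Context {T : eqType} {r : rel T}.
Hypothesis r_trans : forall a b c, r a b -> r b c -> r a c.
Hypothesis r_total : forall a b, a != b -> r a b \/ r b a.

Lemma exists_greatest (x : T) (s : seq T) :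
  exists2 d, d \in x :: s & forall a, a \in x :: s -> a != d -> r d a.
Proof.
elim: s x => [|y s IH] x.
  by exists x; rewrite ?mem_head // => a; rewrite inE => /eqP ->; rewrite eqxx.
have [d d_in d_max] := IH y.
have [->|x_neq_d] := eqVneq x d.
  exists d; rewrite ?mem_head // => a.
  by rewrite inE => /predU1P [->|]; [rewrite eqxx | exact: d_max].
have [x_d | d_x] := r_total _ _ x_neq_d.
- exists x; rewrite ?mem_head // => a.
  rewrite inE => /predU1P [->|a_in]; first by rewrite eqxx.
  have [-> //|a_neq_d] := eqVneq a d.
  by move=> _; apply: r_trans x_d (d_max a a_in a_neq_d).
- exists d; first by rewrite inE d_in orbT.
  by move=> a; rewrite inE => /predU1P [->|]; [|exact: d_max].
Qed.
End Greatest.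

Section Demand.
Context {R : realType} {A : finType} {r : rel A}.

Lemma pref_opt_trans : strict_linear_order r ->
  forall a b c, pref_opt r a b -> pref_opt r b c -> pref_opt r a c.
Proof.
by case=> _ r_trans _ [a|] [b|] [c|] //=; apply: r_trans.
Qed.

Lemma pref_opt_total : strict_linear_order r ->
  forall a b, a != b -> pref_opt r a b \/ pref_opt r b a.
Proof.
case=> _ _ r_total [a|] [b|] //=; try by [left | right].
exact: r_total.
Qed.

Lemma demand_exists {pv : option A -> R} {b : R} :
  strict_linear_order r -> pv None <= b -> exists d, is_demand r pv b d.
Proof.
move=> r_lin pv0.
have [d] := exists_greatest (pref_opt_trans r_lin) (pref_opt_total r_lin)
  None [seq a <- index_enum (option A) | pv a <= b].
rewrite inE mem_filter => d_in d_max; exists d; split.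
  by case/predU1P: d_in => [->|/andP []].
move=> a pva a_neq_d; apply: d_max => //.
by rewrite inE mem_filter pva mem_index_enum orbT.
Qed.

Lemma demand_None_unaffordable {pv : option A -> R} {b : R} :
  is_demand r pv b None -> forall a, b < pv (Some a).
Proof.
by case=> _ None_max a; rewrite ltNge; apply/negP => /None_max /(_ isT).
Qed.

Lemma measurable_demand (pv : option A -> R) (d : option A) :
  measurable [set b : R | is_demand r pv b d].
Proof.
have -> : [set b : R | is_demand r pv b d] = [set b | pv d <= b] `&`
    \bigcap_(a in [set a | a != d /\ ~~ pref_opt r d a]) [set b | b < pv a].
  apply/seteqP; split => b.
  - case=> affordable d_max; split => // a [a_neq_d not_d_a] /=.
    by rewrite ltNge; apply: contraNN not_d_a => /d_max; apply.
  - case=> affordable cheaper; split => // a pva a_neq_d.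
    apply/negPn/negP => not_d_a.
    by move: (cheaper a (conj a_neq_d not_d_a)) => /=; rewrite ltNge pva.
apply: measurableI; first by rewrite -set_itvcy; exact: measurable_itv.
apply: fin_bigcap_measurable; first exact: finite_finset.
by move=> a _; rewrite -set_itvNyo; exact: measurable_itv.
Qed.

Lemma prob_income_le_sum_demand (P : probability R R)
    {pv : option A -> R} {a : A} :
  strict_linear_order r -> pv None = 0 -> pv (Some a) = 0 ->
  (P `[0%R, 1%R] <= \sum_(c : A) P [set b | is_demand r pv b (Some c)])%E.
Proof.
move=> r_lin pv0 pva.
rewrite [X in (_ <= X)%E]fsbig_seq ?index_enum_uniq //.
apply: content_sub_fsum (finite_seq _) _ (measurable_itv _) _.
  by move=> c _; exact: measurable_demand.
move=> b; rewrite /= in_itv /= => /andP [b_ge0 _].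
have pv0_le_b : pv None <= b by rewrite pv0.
have [[c|] demand_b] := demand_exists r_lin pv0_le_b.
  by exists c => //=; rewrite mem_index_enum.
by move: (demand_None_unaffordable demand_b a); rewrite pva ltNge b_ge0.
Qed.
End Demand.

Theorem mainTheorem7 (R : realType) (V A : finType) (pref : V -> rel A)
    (P : probability R R)
    (x : V -> option A -> R) (y : A -> R) (p : V -> option A -> R) :
  (0 < #|V|)%N ->
  (forall v, strict_linear_order (pref v)) ->
  P `[0%R, 1%R] = 1%E ->
  is_LEO pref P 1 x y p ->
  \sum_(a : A) y a = 1 /\ (forall (a : A) (v : V), x v (Some a) = y a).
Proof.
move=> _ pref_lin P01 [_ [p0 [_ [_ [x_prob [x_le_y [sum_y _]]]]]]].
split => // a v; have [xy_le price0] := x_le_y v a.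
apply/eqP; rewrite eq_le xy_le /= leNgt; apply/negP => xy_lt.
have sum_x_ge1 : 1 <= \sum_(c : A) x v (Some c).
  rewrite -lee_fin -sumEFin; under eq_bigr do rewrite x_prob.
  rewrite -P01.
  exact (prob_income_le_sum_demand P (pref_lin v) (p0 v) (price0 xy_lt)).
have : \sum_(c : A) x v (Some c) < \sum_(c : A) y c.
  rewrite [ltLHS](bigD1 a) // [ltRHS](bigD1 a) //=.
  by apply: ltr_leD => //; apply: ler_sum => c _; exact: (x_le_y v c).1.
by rewrite sum_y ltNge sum_x_ge1.
Qed.
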